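(* There is a computable equivalence structure that is computably categorical but not computably bi-embeddably categorical.
   Context: An equivalence structure $\mathcal{A}=(A,E)$ has universe $A\subseteq\omega$ and an equivalence relation $E$ on $A$; it is computable if its atomic diagram is computable. Two structures are bi-embeddable if each embeds into the other. A computable structure $\mathcal{A}$ is computably bi-embeddably categorical if every computable structure bi-embeddable with $\mathcal{A}$ is bi-embeddable with $\mathcal{A}$ via computable embeddings in both directions. A computable structure $\mathcal{A}$ is computably categorical if for every computable structure $\mathcal{B}$ isomorphic to $\mathcal{A}$ there is a computable isomorphism from $\mathcal{B}$ to $\mathcal{A}$. *)

From Stdlib Require Import List Arith.
Import ListNotations.

Inductive code : Type :=
| cZero : code
| cSucc : code
| cProj : nat -> code                (* i-th argument (0 if absent) *)
| cComp : code -> list code -> code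
| cPrec : code -> code -> code       (* primitive recursion on first arg *)
| cMu   : code -> code.

Inductive eval : code -> list nat -> nat -> Prop :=
| ev_zero : forall xs, eval cZero xs 0
| ev_succ : forall x xs, eval cSucc (x :: xs) (S x)
| ev_proj : forall i xs, eval (cProj i) xs (nth i xs 0)
| ev_comp : forall f gs xs ys y,
    eval_list gs xs ys -> eval f ys y -> eval (cComp f gs) xs y
| ev_prec0 : forall f g xs y,
    eval f xs y -> eval (cPrec f g) (0 :: xs) y
| ev_precS : forall f g n xs r y,
    eval (cPrec f g) (n :: xs) r -> eval g (n :: r :: xs) y ->
    eval (cPrec f g) (S n :: xs) y
| ev_mu : forall f xs n,
    eval f (n :: xs) 0 ->
    (forall m, m < n -> exists k, eval f (m :: xs) (S k)) ->
    eval (cMu f) xs n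
with eval_list : list code -> list nat -> list nat -> Prop :=
| evl_nil : forall xs, eval_list [] xs []
| evl_cons : forall g gs xs y ys,
    eval g xs y -> eval_list gs xs ys -> eval_list (g :: gs) xs (y :: ys).

Definition computable_fun (f : nat -> nat) : Prop :=
  exists c : code, forall x, eval c [x] (f x).

Definition computable_pred (P : nat -> Prop) : Prop :=
  exists c : code, forall x,
    (P x -> eval c [x] 1) /\ (~ P x -> eval c [x] 0).

Definition computable_rel (R : nat -> nat -> Prop) : Prop :=
  exists c : code, forall x y,
    (R x y -> eval c [x; y] 1) /\ (~ R x y -> eval c [x; y] 0).

Record EqStr : Type := {
  univ : nat -> Prop;
  rel  : nat -> nat -> Prop;
  rel_dom   : forall x y, rel x y -> univ x /\ univ y;
  rel_refl  : forall x, univ x -> rel x x;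
  rel_sym   : forall x y, rel x y -> rel y x;
  rel_trans : forall x y z, rel x y -> rel y z -> rel x z
}.

Definition computable_str (A : EqStr) : Prop :=
  computable_pred (univ A) /\ computable_rel (rel A).

Definition is_embedding (A B : EqStr) (f : nat -> nat) : Prop :=
  (forall x, univ A x -> univ B (f x)) /\
  (forall x y, univ A x -> univ A y -> f x = f y -> x = y) /\
  (forall x y, univ A x -> univ A y -> (rel A x y <-> rel B (f x) (f y))).

Definition is_iso (A B : EqStr) (f : nat -> nat) : Prop :=
  is_embedding A B f /\ (forall y, univ B y -> exists x, univ A x /\ f x = y).

Definition embeds (A B : EqStr) : Prop := exists f, is_embedding A B f.
Definition bi_embeddable (A B : EqStr) : Prop := embeds A B /\ embeds B A.
Definition isomorphic (A B : EqStr) : Prop := exists f, is_iso A B f.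

Definition comp_categorical (A : EqStr) : Prop :=
  forall B : EqStr, computable_str B -> isomorphic B A ->
    exists f, computable_fun f /\ is_iso B A f.

Definition comp_bi_emb_categorical (A : EqStr) : Prop :=
  forall B : EqStr, computable_str B -> bi_embeddable A B ->
    exists f g, computable_fun f /\ computable_fun g /\
      is_embedding A B f /\ is_embedding B A g.

From Stdlib Require Import List Arith Lia Classical ClassicalEpsilon.
Import ListNotations.

(* Take for [A] the structure [omega_omega]: universe ω, with the columns
   [{cpair i j | j}] as classes.

   [A] is computably categorical: in a computable copy [B] (ω classes, all
   infinite) send [x] to [cpair c r], where [c] counts the classes whose least
   element is smaller than that of the class of [x] and [r] counts the elements
   of the class of [x] below [x]; both are bounded searches.

   To refute computable bi-embeddable categoricity, build a computable
   [diag] ⊆ [A] by diagonalisation: column [k] stops growing at the first time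
   [t] at which some program [e <= t] with [2 e <= k] has converged on
   [cpair 0 0, ..., cpair (2 e) 0] and the largest column of its outputs is [k].
   Each [e] kills at most one column, and only columns [k >= 2 e], so infinitely
   many columns survive and [A] embeds into [diag]. An embedding computed by [e]
   maps the first [2 e + 1] columns into distinct columns; the largest of these
   is [>= 2 e], so it is killed and stays finite, yet it must contain the image
   of an infinite column.
   Running programs for [t] steps uses an abstract machine on numbered codes
   whose step function is primitive recursive. *)

(** * Primitive recursive closure properties *)

Definition computable_fun2 (f : nat -> nat -> nat) : Prop :=
  exists c : code, forall x y, eval c [x; y] (f x y).

Fixpoint const_code (n : nat) : code :=
  match n with 0 => cZero | S n => cComp cSucc [const_code n] end.

Lemma eval_const_code n xs : eval (const_code n) xs n.
Proof.
  induction n as [|n IH]; simpl.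
  - constructor.
  - econstructor; [econstructor; [exact IH | constructor] | constructor].
Qed.

Lemma computable_ext f g :
  computable_fun f -> (forall x, f x = g x) -> computable_fun g.
Proof. intros [c Hc] E. exists c. intro x. rewrite <- E. apply Hc. Qed.

Lemma computable2_ext f g :
  computable_fun2 f -> (forall x y, f x y = g x y) -> computable_fun2 g.
Proof. intros [c Hc] E. exists c. intros x y. rewrite <- E. apply Hc. Qed.

Lemma computable_id : computable_fun (fun x => x).
Proof. exists (cProj 0). intro x. exact (ev_proj 0 [x]). Qed.

Lemma computable_const n : computable_fun (fun _ => n).
Proof. exists (const_code n). intro. apply eval_const_code. Qed.

Lemma computable_succ : computable_fun S.
Proof. exists cSucc. intro. constructor. Qed.

Lemma computable_comp h f :
  computable_fun h -> computable_fun f -> computable_fun (fun x => h (f x)).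
Proof.
  intros [ch Hh] [cf Hf]. exists (cComp ch [cf]). intro x.
  econstructor; [econstructor; [apply Hf | constructor] | apply Hh].
Qed.

Lemma computable_comp2 h f g : computable_fun2 h -> computable_fun f ->
  computable_fun g -> computable_fun (fun x => h (f x) (g x)).
Proof.
  intros [ch Hh] [cf Hf] [cg Hg]. exists (cComp ch [cf; cg]). intro x.
  econstructor; [repeat econstructor; [apply Hf | apply Hg] | apply Hh].
Qed.

Lemma computable2_comp h f :
  computable_fun h -> computable_fun2 f -> computable_fun2 (fun x y => h (f x y)).
Proof.
  intros [ch Hh] [cf Hf]. exists (cComp ch [cf]). intros x y.
  econstructor; [econstructor; [apply Hf | constructor] | apply Hh].
Qed.

Lemma computable2_comp2 h f g : computable_fun2 h -> computable_fun2 f ->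
  computable_fun2 g -> computable_fun2 (fun x y => h (f x y) (g x y)).
Proof.
  intros [ch Hh] [cf Hf] [cg Hg]. exists (cComp ch [cf; cg]). intros x y.
  econstructor; [repeat econstructor; [apply Hf | apply Hg] | apply Hh].
Qed.

Lemma computable2_fst : computable_fun2 (fun x _ => x).
Proof. exists (cProj 0). intros x y. exact (ev_proj 0 [x; y]). Qed.

Lemma computable2_snd : computable_fun2 (fun _ y => y).
Proof. exists (cProj 1). intros x y. exact (ev_proj 1 [x; y]). Qed.

Lemma computable2_const n : computable_fun2 (fun _ _ => n).
Proof. exists (const_code n). intros. apply eval_const_code. Qed.

Fixpoint natrec (a : nat) (h : nat -> nat -> nat) (n : nat) : nat :=
  match n with 0 => a | S n => h n (natrec a h n) end.

Lemma computable_natrec a h : computable_fun2 h -> computable_fun (natrec a h).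
Proof.
  intros [ch Hh]. exists (cPrec (const_code a) ch). intro n.
  induction n as [|n IH]; simpl.
  - constructor. apply eval_const_code.
  - econstructor; [exact IH | apply Hh].
Qed.

Fixpoint iter_param (g : nat -> nat) (h : nat -> nat -> nat) (n y : nat) : nat :=
  match n with 0 => g y | S n => h (iter_param g h n y) y end.

Lemma computable2_iter_param g h :
  computable_fun g -> computable_fun2 h -> computable_fun2 (iter_param g h).
Proof.
  intros [cg Hg] [ch Hh]. exists (cPrec cg (cComp ch [cProj 1; cProj 2])). intros n y.
  induction n as [|n IH]; simpl.
  - constructor. apply Hg.
  - econstructor; [exact IH|].
    econstructor; [repeat econstructor | apply Hh].
Qed.

Lemma computable2_add : computable_fun2 Nat.add.
Proof.
  apply (computable2_ext (iter_param (fun y => y) (fun r _ => S r))).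
  - apply computable2_iter_param; [apply computable_id|].
    apply (computable2_comp S (fun r _ => r)); [apply computable_succ | apply computable2_fst].
  - intros n y. induction n; simpl; auto.
Qed.

Lemma computable2_mul : computable_fun2 Nat.mul.
Proof.
  apply (computable2_ext (iter_param (fun _ => 0) Nat.add)).
  - apply computable2_iter_param; [apply computable_const | apply computable2_add].
  - intros n y. induction n; simpl; lia.
Qed.

Lemma computable_predecessor : computable_fun pred.
Proof.
  apply (computable_ext (natrec 0 (fun n _ => n))).
  - apply computable_natrec, computable2_fst.
  - intros []; reflexivity.
Qed.

Lemma computable2_sub_rev : computable_fun2 (fun n y => y - n).
Proof.
  apply (computable2_ext (iter_param (fun y => y) (fun r _ => pred r))).
  - apply computable2_iter_param; [apply computable_id|].
    apply (computable2_comp pred (fun r _ => r));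
      [apply computable_predecessor | apply computable2_fst].
  - intros n y. induction n; simpl; lia.
Qed.

Lemma computable2_iter f : computable_fun f -> computable_fun2 (fun n z => Nat.iter n f z).
Proof.
  intro Hf. apply (computable2_ext (iter_param (fun z => z) (fun r _ => f r))).
  - apply computable2_iter_param; [apply computable_id|].
    apply (computable2_comp f (fun r _ => r)); [exact Hf | apply computable2_fst].
  - intros n z. induction n; simpl; congruence.
Qed.

Definition iszero (n : nat) : nat := match n with 0 => 1 | S _ => 0 end.

Lemma computable_iszero : computable_fun iszero.
Proof.
  apply (computable_ext (natrec 1 (fun _ _ => 0))).
  - apply computable_natrec, computable2_const.
  - intros []; reflexivity.
Qed.

Section PointwiseClosure.
Variables a b : nat -> nat.
Hypotheses (Ha : computable_fun a) (Hb : computable_fun b).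

Lemma computable_add : computable_fun (fun x => a x + b x).
Proof. exact (computable_comp2 _ _ _ computable2_add Ha Hb). Qed.

Lemma computable_mul : computable_fun (fun x => a x * b x).
Proof. exact (computable_comp2 _ _ _ computable2_mul Ha Hb). Qed.

Lemma computable_sub : computable_fun (fun x => a x - b x).
Proof. exact (computable_comp2 (fun n y => y - n) _ _ computable2_sub_rev Hb Ha). Qed.

Lemma computable_max : computable_fun (fun x => Nat.max (a x) (b x)).
Proof.
  apply (computable_ext (fun x => b x + (a x - b x))).
  - apply (computable_comp2 _ _ _ computable2_add Hb computable_sub).
  - intro x. lia.
Qed.

Lemma computable_eqb : computable_fun (fun x => Nat.b2n (a x =? b x)).
Proof.
  apply (computable_ext (fun x => iszero ((a x - b x) + (b x - a x)))).
  - apply (computable_comp iszero); [exact computable_iszero|].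
    apply (computable_comp2 _ _ _ computable2_add computable_sub).
    exact (computable_comp2 (fun n y => y - n) _ _ computable2_sub_rev Ha Hb).
  - intro x. destruct (Nat.eqb_spec (a x) (b x)) as [E|E].
    + rewrite E, Nat.sub_diag. reflexivity.
    + destruct (a x - b x + (b x - a x)) eqn:D; [lia | reflexivity].
Qed.

Lemma computable_leb : computable_fun (fun x => Nat.b2n (a x <=? b x)).
Proof.
  apply (computable_ext (fun x => iszero (a x - b x))).
  - exact (computable_comp iszero _ computable_iszero computable_sub).
  - intro x. destruct (Nat.leb_spec (a x) (b x)).
    + replace (a x - b x) with 0 by lia. reflexivity.
    + destruct (a x - b x) eqn:D; [lia | reflexivity].
Qed.

End PointwiseClosure.

Lemma computable_andb (p q : nat -> bool) :
  computable_fun (fun x => Nat.b2n (p x)) -> computable_fun (fun x => Nat.b2n (q x)) ->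
  computable_fun (fun x => Nat.b2n (p x && q x)).
Proof.
  intros Hp Hq. apply (computable_ext (fun x => Nat.b2n (p x) * Nat.b2n (q x))).
  - exact (computable_mul _ _ Hp Hq).
  - intro x. destruct (p x), (q x); reflexivity.
Qed.

Lemma computable_if (p : nat -> bool) f g : computable_fun (fun x => Nat.b2n (p x)) ->
  computable_fun f -> computable_fun g -> computable_fun (fun x => if p x then f x else g x).
Proof.
  intros Hp Hf Hg.
  apply (computable_ext (fun x => f x * Nat.b2n (p x) + g x * (1 - Nat.b2n (p x)))).
  - apply computable_add; apply computable_mul; auto.
    apply computable_sub; [apply computable_const | exact Hp].
  - intro x. destruct (p x); simpl; lia.
Qed.

(** * Cantor pairing, bounded folds and coded lists *)

Fixpoint tri (w : nat) : nat := match w with 0 => 0 | S w => tri w + S w end.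

Definition cpair (a b : nat) : nat := tri (a + b) + b.

(* [tri_root z] is the largest [w] with [tri w <= z]. *)
Fixpoint tri_root (z : nat) : nat :=
  match z with 0 => 0 | S z => tri_root z + iszero (tri (S (tri_root z)) - S z) end.

Definition csnd (z : nat) : nat := z - tri (tri_root z).
Definition cfst (z : nat) : nat := tri_root z - csnd z.

Lemma tri_mono a b : a <= b -> tri a <= tri b.
Proof. induction 1; simpl; lia. Qed.

Lemma tri_root_spec z : tri (tri_root z) <= z < tri (S (tri_root z)).
Proof.
  induction z as [|z IH]; [simpl; lia|]. cbn [tri_root].
  destruct (tri (S (tri_root z)) - S z) eqn:E; cbn [iszero];
    rewrite ?Nat.add_0_r, ?Nat.add_1_r; simpl in *; lia.
Qed.

Lemma tri_root_unique w z : tri w <= z < tri (S w) -> tri_root z = w.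
Proof.
  intros H. pose proof (tri_root_spec z).
  destruct (Nat.lt_trichotomy (tri_root z) w) as [L|[L|L]]; auto.
  - pose proof (tri_mono (S (tri_root z)) w L). lia.
  - pose proof (tri_mono (S w) (tri_root z) L). lia.
Qed.

Lemma tri_root_cpair a b : tri_root (cpair a b) = a + b.
Proof. apply tri_root_unique. unfold cpair. simpl. lia. Qed.

Lemma csnd_cpair a b : csnd (cpair a b) = b.
Proof. unfold csnd. rewrite tri_root_cpair. unfold cpair. lia. Qed.

Lemma cfst_cpair a b : cfst (cpair a b) = a.
Proof. unfold cfst. rewrite csnd_cpair, tri_root_cpair. lia. Qed.

Lemma cpair_eta z : cpair (cfst z) (csnd z) = z.
Proof.
  pose proof (tri_root_spec z) as H. simpl in H. unfold cfst, csnd, cpair.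
  replace (tri_root z - (z - tri (tri_root z)) + (z - tri (tri_root z))) with (tri_root z)
    by lia.
  lia.
Qed.

Lemma cpair_inj a b c d : cpair a b = cpair c d -> a = c /\ b = d.
Proof.
  intro E. pose proof (f_equal cfst E) as E1. pose proof (f_equal csnd E) as E2.
  rewrite !cfst_cpair in E1. rewrite !csnd_cpair in E2. auto.
Qed.

Lemma csnd_le_cpair a b : b <= cpair a b.
Proof. unfold cpair. lia. Qed.

Lemma computable_tri : computable_fun tri.
Proof.
  apply (computable_ext (natrec 0 (fun n r => r + S n))).
  - apply computable_natrec, computable2_comp2;
      [apply computable2_add | apply computable2_snd |].
    apply (computable2_comp S (fun n _ => n)); [apply computable_succ | apply computable2_fst].
  - intro x. induction x as [|x IH]; simpl; congruence.
Qed.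

Lemma computable_tri_root : computable_fun tri_root.
Proof.
  apply (computable_ext (natrec 0 (fun n r => r + iszero (tri (S r) - S n)))).
  - apply computable_natrec, computable2_comp2;
      [apply computable2_add | apply computable2_snd |].
    apply computable2_comp; [apply computable_iszero|].
    apply (computable2_comp2 (fun n y => y - n)); [apply computable2_sub_rev | |].
    + apply (computable2_comp S (fun n _ => n)); [apply computable_succ | apply computable2_fst].
    + apply (computable2_comp (fun r => tri (S r)) (fun _ r => r));
        [apply computable_comp; [apply computable_tri | apply computable_succ]
        | apply computable2_snd].
  - intro x. induction x as [|x IH]; [reflexivity|]. simpl. rewrite <- IH. reflexivity.
Qed.

Lemma computable_cpair a b :
  computable_fun a -> computable_fun b -> computable_fun (fun x => cpair (a x) (b x)).
Proof.
  intros Ha Hb. unfold cpair. apply computable_add; [|exact Hb].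
  apply computable_comp; [apply computable_tri | apply computable_add; assumption].
Qed.

Lemma computable_csnd a : computable_fun a -> computable_fun (fun x => csnd (a x)).
Proof.
  intro Ha. unfold csnd. apply computable_sub; [exact Ha|].
  apply computable_comp; [apply computable_tri|].
  apply computable_comp; [apply computable_tri_root | exact Ha].
Qed.

Lemma computable_cfst a : computable_fun a -> computable_fun (fun x => cfst (a x)).
Proof.
  intro Ha. unfold cfst. apply computable_sub; [|apply computable_csnd, Ha].
  apply computable_comp; [apply computable_tri_root | exact Ha].
Qed.

Lemma computable_uncurry h a b : computable_fun (fun p => h (cfst p) (csnd p)) ->
  computable_fun a -> computable_fun b -> computable_fun (fun x => h (a x) (b x)).
Proof.
  intros Hh Ha Hb.
  apply (computable_ext (fun x => (fun p => h (cfst p) (csnd p)) (cpair (a x) (b x)))).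
  - apply (computable_comp _ _ Hh). apply computable_cpair; assumption.
  - intro x. simpl. rewrite cfst_cpair, csnd_cpair. reflexivity.
Qed.

Lemma computable2_curry F : computable_fun F -> computable_fun2 (fun x y => F (cpair x y)).
Proof.
  intro HF. apply (computable2_comp F cpair); [exact HF|].
  unfold cpair. apply computable2_comp2; [apply computable2_add | | apply computable2_snd].
  apply computable2_comp; [apply computable_tri | apply computable2_add].
Qed.

Lemma cpair_0_0 : cpair 0 0 = 0.
Proof. reflexivity. Qed.

Global Opaque cpair cfst csnd.

Lemma computable_iter f n z : computable_fun f -> computable_fun n -> computable_fun z ->
  computable_fun (fun x => Nat.iter (n x) f (z x)).
Proof.
  intros. apply (computable_comp2 (fun n z => Nat.iter n f z)); auto using computable2_iter.
Qed.

Fixpoint bfold (q : nat -> nat) (op : nat -> nat -> nat) (a n : nat) : nat :=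
  match n with 0 => 0 | S n => op (bfold q op a n) (q (cpair a n)) end.

(* One step on the state [cpair i (cpair acc a)]. *)
Definition bfold_step (q : nat -> nat) (op : nat -> nat -> nat) (s : nat) : nat :=
  cpair (S (cfst s))
    (cpair (op (cfst (csnd s)) (q (cpair (csnd (csnd s)) (cfst s)))) (csnd (csnd s))).

Lemma iter_bfold_step q op a n :
  Nat.iter n (bfold_step q op) (cpair 0 (cpair 0 a)) = cpair n (cpair (bfold q op a n) a).
Proof.
  induction n as [|n IH]; [reflexivity|]. simpl. rewrite IH. unfold bfold_step.
  rewrite !cfst_cpair, !csnd_cpair, !cfst_cpair. reflexivity.
Qed.

Lemma computable_bfold q op a n : computable_fun q ->
  computable_fun (fun p => op (cfst p) (csnd p)) -> computable_fun a -> computable_fun n ->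
  computable_fun (fun x => bfold q op (a x) (n x)).
Proof.
  intros Hq Hop Ha Hn.
  apply (computable_ext
    (fun x => cfst (csnd (Nat.iter (n x) (bfold_step q op) (cpair 0 (cpair 0 (a x))))))).
  - apply computable_cfst, computable_csnd, computable_iter; [| exact Hn |].
    + unfold bfold_step. apply computable_cpair.
      { apply (computable_comp S); [apply computable_succ | apply computable_cfst, computable_id]. }
      apply computable_cpair; [|apply computable_csnd, computable_csnd, computable_id].
      apply (computable_uncurry op);
        [exact Hop | apply computable_cfst, computable_csnd, computable_id |].
      apply (computable_comp q); [exact Hq|].
      apply computable_cpair; [apply computable_csnd, computable_csnd, computable_id
                              | apply computable_cfst, computable_id].
    + apply computable_cpair; [apply computable_const|].
      apply computable_cpair; [apply computable_const | exact Ha].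
  - intro x. rewrite iter_bfold_step, csnd_cpair, cfst_cpair. reflexivity.
Qed.

Create HintDb computable.

Ltac computability :=
  match goal with
  | |- computable_fun (fun x => x) => exact computable_id
  | |- computable_fun (fun _ => ?c) => exact (computable_const c)
  | |- computable_fun (fun x => if @?b x then @?f x else @?g x) =>
      apply (computable_if b f g); computability
  | |- computable_fun (fun x => Nat.b2n (Nat.eqb (@?a x) (@?b x))) =>
      apply (computable_eqb a b); computability
  | |- computable_fun (fun x => Nat.b2n (Nat.leb (@?a x) (@?b x))) =>
      apply (computable_leb a b); computability
  | |- computable_fun (fun x => Nat.b2n (andb (@?a x) (@?b x))) =>
      apply (computable_andb a b); computability
  | |- computable_fun (fun x => Nat.add (@?a x) (@?b x)) =>
      apply (computable_add a b); computability
  | |- computable_fun (fun x => Nat.sub (@?a x) (@?b x)) =>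
      apply (computable_sub a b); computability
  | |- computable_fun (fun x => Nat.mul (@?a x) (@?b x)) =>
      apply (computable_mul a b); computability
  | |- computable_fun (fun x => Nat.max (@?a x) (@?b x)) =>
      apply (computable_max a b); computability
  | |- computable_fun (fun x => S (@?a x)) =>
      apply (computable_comp S a computable_succ); computability
  | |- computable_fun (fun x => pred (@?a x)) =>
      apply (computable_comp pred a computable_predecessor); computability
  | |- computable_fun (fun x => iszero (@?a x)) =>
      apply (computable_comp iszero a computable_iszero); computability
  | |- computable_fun (fun x => cpair (@?a x) (@?b x)) =>
      apply (computable_cpair a b); computability
  | |- computable_fun (fun x => cfst (@?a x)) => apply (computable_cfst a); computability
  | |- computable_fun (fun x => csnd (@?a x)) => apply (computable_csnd a); computability
  | |- computable_fun (fun x => Nat.iter (@?n x) ?f (@?z x)) =>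
      apply (computable_iter f n z); computability
  | |- computable_fun (fun x => bfold ?q ?op (@?a x) (@?n x)) =>
      apply (computable_bfold q op a n); computability
  | |- computable_fun (fun x => ?h (@?a x)) =>
      first [ apply (computable_comp h a); [solve [eauto with computable] | computability]
            | progress (unfold h); cbv beta; computability ]
  | |- computable_fun (fun x => ?h (@?a x) (@?b x)) =>
      first [ apply (computable_uncurry h a b);
                [solve [eauto with computable] | computability | computability]
            | progress (unfold h); cbv beta; computability ]
  | |- computable_fun (fun x => ?h (@?a x) (@?b x) (@?c x)) =>
      progress (unfold h); cbv beta; computability
  | |- computable_fun (fun x => ?h (@?a x) (@?b x) (@?c x) (@?d x)) =>
      progress (unfold h); cbv beta; computability
  | |- computable_fun ?h =>
      first [ solve [eauto with computable] | progress (unfold h); cbv beta; computability ]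
  end.

Lemma bfold_ext q q' op a a' n : (forall y, y < n -> q (cpair a y) = q' (cpair a' y)) ->
  bfold q op a n = bfold q' op a' n.
Proof. induction n as [|n IH]; simpl; intros H; [|rewrite IH, H]; auto. Qed.

Lemma bsum_eq0 q a n : bfold q Nat.add a n = 0 <-> forall y, y < n -> q (cpair a y) = 0.
Proof.
  induction n as [|n IH]; simpl; [split; intros; lia|].
  split.
  - intros H y Hy. destruct (Nat.eq_dec y n) as [->|]; [lia|]. apply IH; lia.
  - intros H. rewrite (proj2 IH), H; auto.
Qed.

Lemma bsum_mono q a n m : n <= m -> bfold q Nat.add a n <= bfold q Nat.add a m.
Proof. induction 1; simpl; lia. Qed.

Lemma bsum_hits q a : (forall y, q (cpair a y) <= 1) ->
  (forall N, exists m, N <= m /\ q (cpair a m) = 1) ->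
  forall i, exists y, q (cpair a y) = 1 /\ bfold q Nat.add a y = i.
Proof.
  intros H01 Hinf.
  assert (Hunb : forall i, exists n, i <= bfold q Nat.add a n).
  { induction i as [|i [n Hn]]; [exists 0; lia|]. destruct (Hinf n) as [m [Hm Hq]].
    exists (S m). simpl. pose proof (bsum_mono q a n m Hm). lia. }
  assert (Hbelow : forall i n, i < bfold q Nat.add a n ->
            exists y, q (cpair a y) = 1 /\ bfold q Nat.add a y = i).
  { intros i n. induction n as [|n IH]; simpl; intros Hi; [lia|].
    destruct (Nat.lt_ge_cases i (bfold q Nat.add a n)); auto.
    exists n. specialize (H01 n). split; lia. }
  intro i. destruct (Hunb (S i)) as [n Hn]. apply (Hbelow i n). lia.
Qed.

Lemma bmax_ub q a n y : y < n -> q (cpair a y) <= bfold q Nat.max a n.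
Proof.
  induction n as [|n IH]; simpl; intros Hy; [lia|].
  destruct (Nat.eq_dec y n) as [->|]; [lia|]. specialize (IH ltac:(lia)). lia.
Qed.

Lemma bmax_attained q a n : 0 < n -> exists y, y < n /\ bfold q Nat.max a n = q (cpair a y).
Proof.
  induction n as [|[|n] IH]; intros Hn; [lia | exists 0; simpl; split; lia|].
  destruct IH as [y [Hy E]]; [lia|]. cbn [bfold] in *. rewrite E.
  destruct (Nat.le_ge_cases (q (cpair a y)) (q (cpair a (S n)))).
  - exists (S n). split; lia.
  - exists y. split; lia.
Qed.

Definition ccons (x l : nat) : nat := S (cpair x l).
Definition chd (l : nat) : nat := cfst (pred l).
Definition ctl (l : nat) : nat := csnd (pred l).

Fixpoint enc_list (xs : list nat) : nat :=
  match xs with [] => 0 | x :: xs => ccons x (enc_list xs) end.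

Lemma chd_ccons x l : chd (ccons x l) = x.
Proof. apply cfst_cpair. Qed.

Lemma ctl_ccons x l : ctl (ccons x l) = l.
Proof. apply csnd_cpair. Qed.

Lemma chd_0 : chd 0 = 0.
Proof. unfold chd. simpl. rewrite <- cpair_0_0 at 1. apply cfst_cpair. Qed.

Lemma ctl_0 : ctl 0 = 0.
Proof. unfold ctl. simpl. rewrite <- cpair_0_0 at 1. apply csnd_cpair. Qed.

Lemma ccons_eqb_0 x l : (ccons x l =? 0) = false.
Proof. reflexivity. Qed.

Lemma length_le_enc_list xs : length xs <= enc_list xs.
Proof.
  induction xs as [|x xs IH]; simpl; [lia|].
  pose proof (csnd_le_cpair x (enc_list xs)). unfold ccons. lia.
Qed.

Definition cnth (i l : nat) : nat := chd (Nat.iter i ctl l).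

Lemma iter_ctl_0 k : Nat.iter k ctl 0 = 0.
Proof. induction k as [|k IH]; simpl; [reflexivity | rewrite IH; apply ctl_0]. Qed.

Lemma cnth_enc_list i xs : cnth i (enc_list xs) = nth i xs 0.
Proof.
  unfold cnth. revert xs. induction i as [|i IH]; intros [|x xs];
    rewrite ?Nat.iter_succ_r; simpl.
  - apply chd_0.
  - apply chd_ccons.
  - rewrite ctl_0, iter_ctl_0. apply chd_0.
  - rewrite ctl_ccons. apply IH.
Qed.

Definition rev_step (p : nat) : nat :=
  if cfst p =? 0 then p else cpair (ctl (cfst p)) (ccons (chd (cfst p)) (csnd p)).

(* [l] rounds suffice since a coded list exceeds its length. *)
Definition crev (l : nat) : nat := csnd (Nat.iter l rev_step (cpair l 0)).

Lemma iter_rev_step xs acc k : length xs <= k ->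
  Nat.iter k rev_step (cpair (enc_list xs) (enc_list acc)) = cpair 0 (enc_list (rev xs ++ acc)).
Proof.
  revert acc k. induction xs as [|x xs IH]; intros acc k Hk.
  - induction k as [|k IHk]; [reflexivity|].
    rewrite Nat.iter_succ_r. unfold rev_step at 2. rewrite cfst_cpair. apply IHk. simpl. lia.
  - destruct k as [|k]; [simpl in Hk; lia|].
    rewrite Nat.iter_succ_r. unfold rev_step at 2. simpl enc_list.
    rewrite cfst_cpair, ccons_eqb_0, csnd_cpair, ctl_ccons, chd_ccons.
    change (ccons x (enc_list acc)) with (enc_list (x :: acc)).
    rewrite IH by (simpl in Hk; lia). simpl. rewrite <- app_assoc. reflexivity.
Qed.

Lemma crev_enc_list xs : crev (enc_list xs) = enc_list (rev xs).
Proof.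
  unfold crev. change (cpair (enc_list xs) 0) with (cpair (enc_list xs) (enc_list [])).
  rewrite iter_rev_step by apply length_le_enc_list.
  rewrite csnd_cpair, app_nil_r. reflexivity.
Qed.

Lemma computable_crev : computable_fun crev.
Proof. computability. Qed.
#[export] Hint Resolve computable_crev : computable.

(** * A universal machine *)

Fixpoint code_num (c : code) : nat :=
  match c with
  | cZero => cpair 0 0
  | cSucc => cpair 1 0
  | cProj i => cpair 2 i
  | cComp f gs => cpair 3 (cpair (code_num f) (enc_list (map code_num gs)))
  | cPrec f g => cpair 4 (cpair (code_num f) (code_num g))
  | cMu f => cpair 5 (code_num f)
  end.

(* States of an abstract machine with a stack [K] of continuation frames:
   [eval_st c xs K] runs the code numbered [c] on the coded list [xs],
   [ret_st y K] returns the value [y] to the top frame of [K]. *)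
Definition eval_st (c xs K : nat) : nat := cpair (cpair 0 (cpair c xs)) K.
Definition ret_st (y K : nat) : nat := cpair (cpair 1 y) K.

(* Pending composition [f (g_1 xs, ...)]: the codes [rest] of the [g_i] still
   to run, and the values [acc] already computed, in reverse order. *)
Definition comp_frame (f rest xs acc : nat) : nat :=
  cpair 0 (cpair f (cpair rest (cpair xs acc))).
(* Primitive recursion with step [g], counting up from [i] to [n]. *)
Definition prec_frame (g i n xs : nat) : nat := cpair 1 (cpair g (cpair i (cpair n xs))).
(* Minimisation of [f], currently testing [n]. *)
Definition mu_frame (f n xs : nat) : nat := cpair 2 (cpair f (cpair n xs)).

Definition step (s : nat) : nat :=
  let m := cfst s in let K := csnd s in
  if cfst m =? 0 then
    let c := cfst (csnd m) in let xs := csnd (csnd m) in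
    let tag := cfst c in let d := csnd c in
    if tag =? 0 then ret_st 0 K
    else if tag =? 1 then ret_st (S (chd xs)) K
    else if tag =? 2 then ret_st (cnth d xs) K
    else if tag =? 3 then
      if csnd d =? 0 then eval_st (cfst d) 0 K
      else eval_st (chd (csnd d)) xs (ccons (comp_frame (cfst d) (ctl (csnd d)) xs 0) K)
    else if tag =? 4 then
      eval_st (cfst d) (ctl xs) (ccons (prec_frame (csnd d) 0 (chd xs) (ctl xs)) K)
    else eval_st d (ccons 0 xs) (ccons (mu_frame d 0 xs) K)
  else
    let y := csnd m in
    if K =? 0 then s
    else
      let fr := chd K in let K' := ctl K in let fd := csnd fr in
      if cfst fr =? 0 then
        let f := cfst fd in let rest := cfst (csnd fd) in
        let xs := cfst (csnd (csnd fd)) in let acc := csnd (csnd (csnd fd)) in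
        if rest =? 0 then eval_st f (crev (ccons y acc)) K'
        else eval_st (chd rest) xs (ccons (comp_frame f (ctl rest) xs (ccons y acc)) K')
      else if cfst fr =? 1 then
        let g := cfst fd in let i := cfst (csnd fd) in
        let n := cfst (csnd (csnd fd)) in let xs := csnd (csnd (csnd fd)) in
        if i =? n then ret_st y K'
        else eval_st g (ccons i (ccons y xs)) (ccons (prec_frame g (S i) n xs) K')
      else
        let f := cfst fd in let n := cfst (csnd fd) in let xs := csnd (csnd fd) in
        if y =? 0 then ret_st n K'
        else eval_st f (ccons (S n) xs) (ccons (mu_frame f (S n) xs) K').

Lemma computable_step : computable_fun step.
Proof. unfold step. cbv zeta. computability. Qed.
#[export] Hint Resolve computable_step : computable.

Ltac unfold_step :=
  unfold step, eval_st, ret_st, comp_frame, prec_frame, mu_frame; cbv zeta;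
  cbn [code_num map enc_list];
  repeat rewrite ?cfst_cpair, ?csnd_cpair, ?chd_ccons, ?ctl_ccons, ?cnth_enc_list;
  simpl; repeat rewrite ?cfst_cpair, ?csnd_cpair, ?chd_ccons, ?ctl_ccons.

Lemma step_zero xs K : step (eval_st (code_num cZero) xs K) = ret_st 0 K.
Proof. unfold_step. reflexivity. Qed.

Lemma step_succ x xs K :
  step (eval_st (code_num cSucc) (enc_list (x :: xs)) K) = ret_st (S x) K.
Proof. unfold_step. reflexivity. Qed.

Lemma step_proj i xs K :
  step (eval_st (code_num (cProj i)) (enc_list xs) K) = ret_st (nth i xs 0) K.
Proof. unfold_step. reflexivity. Qed.

Lemma step_comp_nil f xs K :
  step (eval_st (code_num (cComp f [])) xs K) = eval_st (code_num f) 0 K.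
Proof. unfold_step. reflexivity. Qed.

Lemma step_comp_cons f g gs xs K :
  step (eval_st (code_num (cComp f (g :: gs))) xs K) =
  eval_st (code_num g) xs (ccons (comp_frame (code_num f) (enc_list (map code_num gs)) xs 0) K).
Proof. unfold_step. reflexivity. Qed.

Lemma step_prec f g n xs K :
  step (eval_st (code_num (cPrec f g)) (enc_list (n :: xs)) K) =
  eval_st (code_num f) (enc_list xs) (ccons (prec_frame (code_num g) 0 n (enc_list xs)) K).
Proof. unfold_step. reflexivity. Qed.

Lemma step_mu f xs K :
  step (eval_st (code_num (cMu f)) xs K) =
  eval_st (code_num f) (ccons 0 xs) (ccons (mu_frame (code_num f) 0 xs) K).
Proof. unfold_step. reflexivity. Qed.

Lemma step_halted y : step (ret_st y 0) = ret_st y 0.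
Proof. unfold_step. reflexivity. Qed.

Lemma step_ret_comp y f rest xs acc K :
  step (ret_st y (ccons (comp_frame f rest xs acc) K)) =
  if rest =? 0 then eval_st f (crev (ccons y acc)) K
  else eval_st (chd rest) xs (ccons (comp_frame f (ctl rest) xs (ccons y acc)) K).
Proof. unfold_step. reflexivity. Qed.

Lemma step_ret_prec y g i n xs K :
  step (ret_st y (ccons (prec_frame g i n xs) K)) =
  if i =? n then ret_st y K
  else eval_st g (ccons i (ccons y xs)) (ccons (prec_frame g (S i) n xs) K).
Proof. unfold_step. reflexivity. Qed.

Lemma step_ret_mu y f n xs K :
  step (ret_st y (ccons (mu_frame f n xs) K)) =
  if y =? 0 then ret_st n K
  else eval_st f (ccons (S n) xs) (ccons (mu_frame f (S n) xs) K).
Proof. unfold_step. reflexivity. Qed.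

Definition reach (s t : nat) : Prop := exists n, Nat.iter n step s = t.

Lemma reach_refl s : reach s s.
Proof. exists 0. reflexivity. Qed.

Lemma reach_trans s t u : reach s t -> reach t u -> reach s u.
Proof. intros [n Hn] [m Hm]. exists (m + n). rewrite Nat.iter_add. congruence. Qed.

Lemma reach_step s t : reach (step s) t -> reach s t.
Proof. intros [n Hn]. exists (n + 1). rewrite Nat.iter_add. exact Hn. Qed.

Definition code_ind_nested (P : code -> Prop) (H0 : P cZero) (H1 : P cSucc)
  (H2 : forall i, P (cProj i))
  (H3 : forall f gs, P f -> Forall P gs -> P (cComp f gs))
  (H4 : forall f g, P f -> P g -> P (cPrec f g))
  (H5 : forall f, P f -> P (cMu f)) : forall c, P c :=
  fix F c := match c return P c with
  | cZero => H0
  | cSucc => H1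
  | cProj i => H2 i
  | cComp f gs => H3 f gs (F f)
      ((fix G l := match l return Forall P l with
                   | [] => Forall_nil P
                   | g :: l => Forall_cons g (F g) (G l) end) gs)
  | cPrec f g => H4 f g (F f) (F g)
  | cMu f => H5 f (F f)
  end.

Definition machine_computes (c : code) : Prop :=
  forall xs y, eval c xs y ->
    forall K, reach (eval_st (code_num c) (enc_list xs) K) (ret_st y K).

Lemma reach_comp_args F K g gs : Forall machine_computes (g :: gs) ->
  forall xs ys acc, eval_list (g :: gs) xs ys ->
  reach (eval_st (code_num g) (enc_list xs)
           (ccons (comp_frame F (enc_list (map code_num gs)) (enc_list xs) (enc_list acc)) K))
        (eval_st F (enc_list (rev acc ++ ys)) K).
Proof.
  revert g. induction gs as [|g' gs IH]; intros g Hc xs ys acc Hl;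
    inversion Hc as [|? ? Hg Hgs]; subst; inversion Hl as [|? ? ? y ys' Hy Hys]; subst;
    (eapply reach_trans; [apply Hg, Hy|]); apply reach_step; rewrite step_ret_comp;
    cbn [map enc_list]; change (ccons y (enc_list acc)) with (enc_list (y :: acc)).
  - inversion Hys; subst. cbn [Nat.eqb]. rewrite crev_enc_list. apply reach_refl.
  - rewrite ccons_eqb_0, chd_ccons, ctl_ccons.
    eapply reach_trans; [apply (IH g' Hgs xs ys' (y :: acc) Hys)|].
    simpl. rewrite <- app_assoc. apply reach_refl.
Qed.

Lemma reach_prec_loop f g xs : machine_computes f -> machine_computes g ->
  forall m r, eval (cPrec f g) (m :: xs) r -> forall N K, m <= N ->
  reach (eval_st (code_num f) (enc_list xs)
           (ccons (prec_frame (code_num g) 0 N (enc_list xs)) K))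
        (ret_st r (ccons (prec_frame (code_num g) m N (enc_list xs)) K)).
Proof.
  intros Hf Hg. induction m as [|m IH]; intros r Hr N K HN.
  - inversion Hr; subst. apply Hf. assumption.
  - inversion Hr as [| | | | |? ? ? ? r0 ? Hr0 Hstep|]; subst.
    eapply reach_trans; [apply (IH r0 Hr0 N K); lia|].
    apply reach_step. rewrite step_ret_prec.
    destruct (Nat.eqb_spec m N); [lia|].
    apply (Hg (m :: r0 :: xs)). assumption.
Qed.

Lemma reach_mu_loop f xs n K : machine_computes f ->
  (forall m, m < n -> exists k, eval f (m :: xs) (S k)) ->
  forall m, m <= n ->
  reach (eval_st (code_num f) (ccons 0 (enc_list xs))
           (ccons (mu_frame (code_num f) 0 (enc_list xs)) K))
        (eval_st (code_num f) (ccons m (enc_list xs))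
           (ccons (mu_frame (code_num f) m (enc_list xs)) K)).
Proof.
  intros Hf Hlt. induction m as [|m IH]; intros Hm; [apply reach_refl|].
  eapply reach_trans; [apply IH; lia|].
  destruct (Hlt m) as [k Hk]; [lia|].
  eapply reach_trans; [apply (Hf (m :: xs) (S k) Hk)|].
  apply reach_step. rewrite step_ret_mu. apply reach_refl.
Qed.

Lemma machine_computes_all c : machine_computes c.
Proof.
  induction c as [| |i|f gs IHf IHgs|f g IHf IHg|f IHf] using code_ind_nested;
    intros xs y H K; [inversion H; subst ..| |].
  - apply reach_step. rewrite step_zero. apply reach_refl.
  - apply reach_step. rewrite step_succ. apply reach_refl.
  - apply reach_step. rewrite step_proj. apply reach_refl.
  - destruct gs as [|g gs]; apply reach_step.
    + match goal with Hl : eval_list [] _ _ |- _ => inversion Hl; subst end.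
      rewrite step_comp_nil. apply (IHf []). assumption.
    + rewrite step_comp_cons.
      match goal with Hl : eval_list _ _ ?ys |- _ =>
        eapply reach_trans; [apply (reach_comp_args _ K g gs IHgs xs ys [] Hl)|] end.
      apply IHf. assumption.
  - destruct xs as [|n xs]; [inversion H|].
    apply reach_step. rewrite step_prec.
    eapply reach_trans; [apply (reach_prec_loop f g xs IHf IHg n y H n K); lia|].
    apply reach_step. rewrite step_ret_prec, Nat.eqb_refl. apply reach_refl.
  - inversion H as [| | | | | |? ? ? Hz Hlt]; subst.
    apply reach_step. rewrite step_mu.
    eapply reach_trans; [apply (reach_mu_loop f xs y K IHf Hlt y); lia|].
    eapply reach_trans; [apply (IHf (y :: xs) 0); assumption|].
    apply reach_step. rewrite step_ret_mu. apply reach_refl.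
Qed.

Definition state_at (e x t : nat) : nat := Nat.iter t step (eval_st e (ccons x 0) 0).

Lemma iter_step_halted t y : Nat.iter t step (ret_st y 0) = ret_st y 0.
Proof. induction t as [|t IH]; simpl; [|rewrite IH, step_halted]; reflexivity. Qed.

Lemma eval_state_at c x y : eval c [x] y ->
  exists t0, forall t, t0 <= t -> state_at (code_num c) x t = ret_st y 0.
Proof.
  intro H. destruct (machine_computes_all c [x] y H 0) as [t0 Ht0].
  exists t0. intros t Ht. unfold state_at.
  replace t with ((t - t0) + t0) by lia. rewrite Nat.iter_add.
  change (ccons x 0) with (enc_list [x]). rewrite Ht0. apply iter_step_halted.
Qed.

(** * Computable categoricity of [omega_omega] *)

Lemma pigeonhole n m (f : nat -> nat) : (forall k, k < n -> f k < m) ->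
  (forall k k', k < n -> k' < n -> f k = f k' -> k = k') -> n <= m.
Proof.
  intros Hrange Hinj.
  assert (Hnd : NoDup (map f (seq 0 n))).
  { apply NoDup_map_NoDup_ForallPairs; [|apply seq_NoDup].
    intros a b Ha Hb. apply in_seq in Ha, Hb. apply Hinj; lia. }
  assert (Hincl : incl (map f (seq 0 n)) (seq 0 m)).
  { intros x Hx. apply in_map_iff in Hx as [k [<- Hk]].
    apply in_seq in Hk. apply in_seq. specialize (Hrange k). lia. }
  pose proof (NoDup_incl_length Hnd Hincl) as H. rewrite length_map, !length_seq in H.
  exact H.
Qed.

Lemma uniform_bound (P : nat -> nat -> Prop) :
  (forall i, exists t0, forall t, t0 <= t -> P i t) ->
  forall n, exists t0, forall i t, i < n -> t0 <= t -> P i t.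
Proof.
  intros H n. induction n as [|n [T HT]]; [exists 0; lia|].
  destruct (H n) as [t0 Ht0]. exists (Nat.max T t0).
  intros i t Hi Ht. destruct (Nat.eq_dec i n) as [->|]; [apply Ht0; lia | apply HT; lia].
Qed.

Definition chi (P : Prop) : nat := if excluded_middle_informative P then 1 else 0.

Lemma chi_eq1 P : chi P = 1 <-> P.
Proof. unfold chi. destruct (excluded_middle_informative P); intuition discriminate. Qed.

Lemma chi_le1 P : chi P <= 1.
Proof. unfold chi. destruct (excluded_middle_informative P); lia. Qed.

Lemma chi_iff P Q : (P <-> Q) -> chi P = chi Q.
Proof.
  intro E. unfold chi.
  destruct (excluded_middle_informative P), (excluded_middle_informative Q); tauto.
Qed.

Lemma chi_and P Q : chi (P /\ Q) = chi P * chi Q.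
Proof.
  unfold chi. destruct (excluded_middle_informative P), (excluded_middle_informative Q),
    (excluded_middle_informative (P /\ Q)); tauto.
Qed.

Lemma chi_b2n P (b : bool) : (P <-> b = true) -> chi P = Nat.b2n b.
Proof.
  intro E. unfold chi. destruct (excluded_middle_informative P) as [H|H], b; try reflexivity.
  - apply E in H. discriminate.
  - exfalso. apply H, E. reflexivity.
Qed.

Lemma chi_eq1_le1 n : n <= 1 -> chi (n = 1) = n.
Proof.
  intro H. unfold chi. destruct (excluded_middle_informative (n = 1)); lia.
Qed.

Lemma computable_pred_chi (P : nat -> Prop) :
  computable_pred P <-> computable_fun (fun x => chi (P x)).
Proof.
  unfold chi. split; intros [c Hc]; exists c; intro x;
    specialize (Hc x); destruct (excluded_middle_informative (P x)); intuition.
Qed.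

Lemma computable_rel_chi (R : nat -> nat -> Prop) :
  computable_rel R <-> computable_fun2 (fun x y => chi (R x y)).
Proof.
  unfold chi. split; intros [c Hc]; exists c; intros x y;
    specialize (Hc x y); destruct (excluded_middle_informative (R x y)); intuition.
Qed.

Definition same_column (x y : nat) : Prop := cfst x = cfst y.

Definition omega_omega : EqStr := {|
  univ := fun _ => True;
  rel := same_column;
  rel_dom := fun _ _ _ => conj I I;
  rel_refl := fun _ _ => eq_refl;
  rel_sym := fun _ _ H => eq_sym H;
  rel_trans := fun _ _ _ H1 H2 => eq_trans H1 H2 |}.

Lemma computable_omega_omega : computable_str omega_omega.
Proof.
  split.
  - apply computable_pred_chi, (computable_ext (fun _ => 1)); [apply computable_const|].
    intro x. symmetry. apply chi_eq1. exact I.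
  - apply computable_rel_chi.
    assert (H : computable_fun (fun p => Nat.b2n (cfst (cfst p) =? cfst (csnd p))))
      by computability.
    apply (computable2_ext _ _ (computable2_curry _ H)).
    intros x y. rewrite cfst_cpair, csnd_cpair. symmetry. apply chi_b2n.
      symmetry. apply Nat.eqb_eq.
Qed.

Section CanonicalIsomorphism.
Variable B : EqStr.
Hypothesis B_computable : computable_str B.
Hypothesis classes_infinite :
  forall x N, univ B x -> exists y, N <= y /\ univ B y /\ rel B x y.
Variable rep : nat -> nat.
Hypothesis rep_univ : forall i, univ B (rep i).
Hypothesis rep_inequiv : forall i j, rel B (rep i) (rep j) -> i = j.

Let inB (x : nat) : nat := chi (univ B x).
Let relB (x y : nat) : nat := chi (rel B x y).

Let computable_inB : computable_fun inB.
Proof. apply computable_pred_chi, B_computable. Qed.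

Let computable_relB : computable_fun (fun p => relB (cfst p) (csnd p)).
Proof.
  apply (computable_comp2 relB); [apply computable_rel_chi, B_computable | |].
  - apply computable_cfst, computable_id.
  - apply computable_csnd, computable_id.
Qed.

#[local] Hint Resolve computable_inB computable_relB : computable.

(* [class_ind (cpair x y)] tests whether [y] lies in the class of [x]. *)
Definition class_ind (p : nat) : nat := inB (csnd p) * relB (csnd p) (cfst p).
(* The least element [y <= x] of the class of [x] maximises [S x - y]. *)
Definition class_min (x : nat) : nat :=
  S x - bfold (fun p => class_ind p * (S (cfst p) - csnd p)) Nat.max x (S x).
Definition is_class_min (l : nat) : nat := inB l * Nat.b2n (class_min l =? l).
Definition class_index (x : nat) : nat :=
  bfold (fun p => is_class_min (csnd p)) Nat.add 0 (class_min x).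
Definition rank_in_class (x : nat) : nat := bfold class_ind Nat.add x x.
Definition canon (x : nat) : nat := cpair (class_index x) (rank_in_class x).

Lemma computable_canon : computable_fun canon.
Proof. computability. Qed.

Lemma class_ind_chi x y : class_ind (cpair x y) = chi (univ B y /\ rel B y x).
Proof. unfold class_ind. rewrite chi_and, cfst_cpair, csnd_cpair. reflexivity. Qed.

Lemma class_ind_le1 x y : class_ind (cpair x y) <= 1.
Proof. rewrite class_ind_chi. apply chi_le1. Qed.

Lemma class_ind_eq1 x y : class_ind (cpair x y) = 1 <-> univ B y /\ rel B y x.
Proof. rewrite class_ind_chi. apply chi_eq1. Qed.

Lemma class_ind_rel x x' y : rel B x x' -> class_ind (cpair x y) = class_ind (cpair x' y).
Proof.
  intro R. rewrite !class_ind_chi. apply chi_iff.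
  split; intros [U R']; split; eauto using rel_trans, rel_sym.
Qed.

Lemma class_min_spec x : univ B x ->
  univ B (class_min x) /\ rel B (class_min x) x /\
  forall y, univ B y -> rel B y x -> class_min x <= y.
Proof.
  intro Ux. set (q := fun p => class_ind p * (S (cfst p) - csnd p)).
  assert (Hq : forall y, q (cpair x y) = class_ind (cpair x y) * (S x - y))
    by (intro; unfold q; rewrite cfst_cpair, csnd_cpair; reflexivity).
  assert (Hx : class_ind (cpair x x) = 1) by (apply class_ind_eq1; auto using rel_refl).
  pose proof (bmax_ub q x (S x) x ltac:(lia)) as Hub. rewrite Hq, Hx in Hub.
  destruct (bmax_attained q x (S x) ltac:(lia)) as [y0 [Hy0 E]]. rewrite Hq in E.
  pose proof (class_ind_le1 x y0).
  assert (Hy0' : class_ind (cpair x y0) = 1) by nia.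
  rewrite Hy0' in E.
  assert (Hmin : class_min x = y0) by (unfold class_min; fold q; lia).
  rewrite Hmin. apply class_ind_eq1 in Hy0' as [Uy0 Ry0]. repeat split; auto.
  intros y Uy Ry. destruct (Nat.lt_ge_cases x y); [lia|].
  pose proof (bmax_ub q x (S x) y ltac:(lia)) as Hy.
  rewrite Hq, (proj2 (class_ind_eq1 x y) (conj Uy Ry)) in Hy. lia.
Qed.

Lemma class_min_rel x x' : univ B x -> univ B x' -> rel B x x' -> class_min x = class_min x'.
Proof.
  intros Ux Ux' R.
  destruct (class_min_spec x Ux) as [U1 [R1 M1]], (class_min_spec x' Ux') as [U2 [R2 M2]].
  apply Nat.le_antisymm; [apply M1 | apply M2]; eauto using rel_trans, rel_sym.
Qed.

Lemma rel_iff_class_min x x' : univ B x -> univ B x' ->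
  (rel B x x' <-> class_min x = class_min x').
Proof.
  intros Ux Ux'. split; [apply class_min_rel; auto|]. intro E.
  destruct (class_min_spec x Ux) as [_ [R1 _]], (class_min_spec x' Ux') as [_ [R2 _]].
  rewrite E in R1. eauto using rel_trans, rel_sym.
Qed.

Lemma is_class_min_eq1 l : is_class_min l = 1 <-> univ B l /\ class_min l = l.
Proof.
  unfold is_class_min. rewrite <- chi_eq1 with (P := univ B l). fold (inB l).
  pose proof (chi_le1 (univ B l)). fold (inB l) in H.
  destruct (Nat.eqb_spec (class_min l) l); simpl; split; intros; try nia; intuition.
Qed.

Lemma is_class_min_le1 l : is_class_min l <= 1.
Proof.
  unfold is_class_min. pose proof (chi_le1 (univ B l)). fold (inB l) in H.
  destruct (class_min l =? l); simpl; lia.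
Qed.

Lemma is_class_min_class_min x : univ B x -> is_class_min (class_min x) = 1.
Proof.
  intro Ux. destruct (class_min_spec x Ux) as [U [R _]]. apply is_class_min_eq1.
  split; auto. apply class_min_rel; auto.
Qed.

Lemma class_index_lt x x' : univ B x -> class_min x < class_min x' ->
  class_index x < class_index x'.
Proof.
  intros Ux L. unfold class_index.
  pose proof (bsum_mono (fun p => is_class_min (csnd p)) 0 _ _ L) as H. simpl in H.
  rewrite csnd_cpair, is_class_min_class_min in H; auto. lia.
Qed.

Lemma class_index_inj x x' : univ B x -> univ B x' ->
  class_index x = class_index x' -> class_min x = class_min x'.
Proof.
  intros Ux Ux' E. destruct (Nat.lt_trichotomy (class_min x) (class_min x')) as [L|[L|L]];
    auto; apply class_index_lt in L; auto; lia.
Qed.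

Lemma rank_in_class_lt x x' : univ B x -> univ B x' -> rel B x x' -> x < x' ->
  rank_in_class x < rank_in_class x'.
Proof.
  intros Ux Ux' R L. unfold rank_in_class.
  pose proof (bsum_mono class_ind x' (S x) x' L) as H. simpl in H.
  rewrite (bfold_ext class_ind class_ind Nat.add x' x x) in H
    by (intros; symmetry; apply class_ind_rel; auto).
  assert (class_ind (cpair x' x) = 1) by (apply class_ind_eq1; auto using rel_sym). lia.
Qed.

Lemma class_min_unbounded N : exists m, N <= m /\ is_class_min m = 1.
Proof.
  apply NNPP. intro Hn.
  assert (S N <= N); [|lia].
  apply (pigeonhole (S N) N (fun j => class_min (rep j))).
  - intros j _. destruct (Nat.lt_ge_cases (class_min (rep j)) N); auto.
    exfalso. apply Hn. exists (class_min (rep j)). auto using is_class_min_class_min.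
  - intros k k' _ _ E. apply rep_inequiv, rel_iff_class_min; auto.
Qed.

Lemma canon_same_column x y : univ B x -> univ B y ->
  (rel B x y <-> same_column (canon x) (canon y)).
Proof.
  intros Ux Uy. unfold same_column, canon. rewrite !cfst_cpair, rel_iff_class_min by auto.
  split; [intro E; unfold class_index; rewrite E; reflexivity | apply class_index_inj; auto].
Qed.

Lemma canon_inj x y : univ B x -> univ B y -> canon x = canon y -> x = y.
Proof.
  intros Ux Uy E.
  assert (R : rel B x y) by (apply canon_same_column; auto; unfold same_column; rewrite E; auto).
  unfold canon in E. apply cpair_inj in E as [_ E].
  destruct (Nat.lt_trichotomy x y) as [L|[L|L]]; auto;
    apply rank_in_class_lt in L; auto using rel_sym; lia.
Qed.

Lemma canon_surj z : exists x, univ B x /\ canon x = z.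
Proof.
  destruct (bsum_hits (fun p => is_class_min (csnd p)) 0) with (i := cfst z) as [l [Hl Cl]].
  { intro. apply is_class_min_le1. }
  { intro N. destruct (class_min_unbounded N) as [m [Hm Lm]].
    exists m. rewrite csnd_cpair. auto. }
  rewrite csnd_cpair in Hl. apply is_class_min_eq1 in Hl as [Ul Ll].
  destruct (bsum_hits class_ind l) with (i := csnd z) as [x [Hx Cx]].
  { intro. apply class_ind_le1. }
  { intro N. destruct (classes_infinite l N Ul) as [m [Hm [Um Rm]]].
    exists m. split; auto. apply class_ind_eq1. auto using rel_sym. }
  apply class_ind_eq1 in Hx as [Ux Rx].
  exists x. split; auto. unfold canon. rewrite <- (cpair_eta z). f_equal.
  - unfold class_index. rewrite (class_min_rel x l), Ll; auto.
  - unfold rank_in_class. rewrite <- Cx. apply bfold_ext. intros. apply class_ind_rel. auto.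
Qed.

Lemma canon_iso : is_iso B omega_omega canon.
Proof.
  split; [split; [|split]|].
  - intros. exact I.
  - exact canon_inj.
  - exact canon_same_column.
  - intros z _. apply canon_surj.
Qed.

End CanonicalIsomorphism.

Section IsomorphicToOmegaOmega.
Variables (B : EqStr) (h : nat -> nat).
Hypothesis h_iso : is_iso B omega_omega h.

Lemma iso_omega_omega_inverse : exists g : nat -> nat, forall z, univ B (g z) /\ h (g z) = z.
Proof.
  apply (choice (fun z x => univ B x /\ h x = z)). intro z.
  destruct h_iso as [_ Hsurj]. destruct (Hsurj z I) as [x Hx]. eauto.
Qed.

Lemma iso_omega_omega_classes_infinite :
  forall x N, univ B x -> exists y, N <= y /\ univ B y /\ rel B x y.
Proof.
  intros x N Ux. destruct h_iso as [[_ [_ Hrel]] _].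
  destruct iso_omega_omega_inverse as [g Hg].
  set (col j := g (cpair (cfst (h x)) j)).
  assert (Hcol : forall j, univ B (col j) /\ rel B x (col j)).
  { intro j. destruct (Hg (cpair (cfst (h x)) j)) as [U E]. split; auto.
    apply Hrel; auto. simpl. unfold same_column, col. rewrite E, cfst_cpair. reflexivity. }
  apply NNPP. intro Hn. assert (S N <= N); [|lia].
  apply (pigeonhole (S N) N col).
  - intros j _. destruct (Nat.lt_ge_cases (col j) N); auto.
    exfalso. apply Hn. exists (col j). split; [|apply Hcol]; auto.
  - intros j j' _ _ E. apply (f_equal h) in E. unfold col in E.
    rewrite (proj2 (Hg _)), (proj2 (Hg _)) in E. apply cpair_inj in E. tauto.
Qed.

Lemma iso_omega_omega_reps :
  exists rep : nat -> nat,
    (forall i, univ B (rep i)) /\ forall i j, rel B (rep i) (rep j) -> i = j.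
Proof.
  destruct h_iso as [[_ [_ Hrel]] _]. destruct iso_omega_omega_inverse as [g Hg].
  exists (fun i => g (cpair i 0)). split; [intro; apply Hg|].
  intros i j R. apply Hrel in R; try apply Hg. simpl in R. unfold same_column in R.
  rewrite (proj2 (Hg _)), (proj2 (Hg _)), !cfst_cpair in R. exact R.
Qed.

End IsomorphicToOmegaOmega.

Theorem omega_omega_comp_categorical : comp_categorical omega_omega.
Proof.
  intros B HB [h Hh].
  destruct (iso_omega_omega_reps B h Hh) as [rep [Hrep Hinequiv]].
  exists (canon B). split.
  - apply computable_canon, HB.
  - apply (canon_iso B (iso_omega_omega_classes_infinite B h Hh) rep Hrep Hinequiv).
Qed.

(** * A computable copy defeating computable bi-embeddings *)

Definition halted (s : nat) : Prop := cfst (cfst s) = 1 /\ csnd s = 0.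
Definition running (s : nat) : nat := 1 - Nat.b2n ((cfst (cfst s) =? 1) && (csnd s =? 0)).

(* For [p = cpair (cpair e t) i]: whether the code numbered [e] is still running on
   [cpair i 0] at time [t], and the column [cfst y] of its output once it has
   halted in [ret_st y 0]. *)
Definition running_at (p : nat) : nat :=
  running (state_at (cfst (cfst p)) (cpair (csnd p) 0) (csnd (cfst p))).
Definition output_column_at (p : nat) : nat :=
  cfst (csnd (cfst (state_at (cfst (cfst p)) (cpair (csnd p) 0) (csnd (cfst p))))).

Definition pending (e t : nat) : nat := bfold running_at Nat.add (cpair e t) (S (2 * e)).
Definition target (e t : nat) : nat := bfold output_column_at Nat.max (cpair e t) (S (2 * e)).

(* For [p = cpair (cpair k t) e]: at time [t], program [e] has converged on all
   [cpair i 0] with [i <= 2 e] and claims column [k >= 2 e]. *)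
Definition kills (p : nat) : nat :=
  Nat.b2n ((pending (csnd p) (csnd (cfst p)) =? 0)
           && (target (csnd p) (csnd (cfst p)) =? cfst (cfst p))
           && (2 * csnd p <=? cfst (cfst p))).
Definition in_diag (z : nat) : nat := iszero (bfold kills Nat.add z (S (csnd z))).

Definition killed (k t : nat) : Prop :=
  exists e, e <= t /\ pending e t = 0 /\ target e t = k /\ 2 * e <= k.

Lemma computable_in_diag : computable_fun in_diag.
Proof.
  unfold in_diag, kills, target, output_column_at, pending, running_at, running, state_at.
  computability.
Qed.
#[export] Hint Resolve computable_in_diag : computable.

Lemma running_eq0 s : running s = 0 <-> halted s.
Proof.
  unfold running, halted.
  destruct (Nat.eqb_spec (cfst (cfst s)) 1), (Nat.eqb_spec (csnd s) 0); simpl; intuition lia.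
Qed.

Lemma halted_ret_st y : halted (ret_st y 0).
Proof. unfold halted, ret_st. rewrite !cfst_cpair, csnd_cpair. auto. Qed.

Lemma state_at_halted e x t t' :
  halted (state_at e x t) -> t <= t' -> state_at e x t' = state_at e x t.
Proof.
  intros [H1 H2] L. unfold state_at in *.
  replace t' with ((t' - t) + t) by lia. rewrite Nat.iter_add.
  rewrite <- (cpair_eta (Nat.iter t step _)), <- (cpair_eta (cfst (Nat.iter t step _))), H1, H2.
  apply iter_step_halted.
Qed.

Lemma pending_eq0 e t :
  pending e t = 0 <-> forall i, i <= 2 * e -> halted (state_at e (cpair i 0) t).
Proof.
  unfold pending. rewrite bsum_eq0.
  split; intros H i Hi; specialize (H i ltac:(lia)); unfold running_at in *;
    rewrite ?cfst_cpair, ?csnd_cpair in *; apply running_eq0; auto.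
Qed.

Lemma pending_eq0_mono e t t' : pending e t = 0 -> t <= t' -> pending e t' = 0.
Proof.
  rewrite !pending_eq0. intros H L i Hi. rewrite (state_at_halted e _ t t'); auto.
Qed.

Lemma target_stable e t t' : pending e t = 0 -> t <= t' -> target e t' = target e t.
Proof.
  rewrite pending_eq0. intros H L. apply bfold_ext. intros i Hi. unfold output_column_at.
  rewrite !cfst_cpair, !csnd_cpair, (state_at_halted e _ t t'); auto. apply H. lia.
Qed.

Lemma killed_mono k t t' : killed k t -> t <= t' -> killed k t'.
Proof.
  intros [e [Le [Hp [Ht Hk]]]] L. exists e. repeat split; try lia.
  - eapply pending_eq0_mono; eauto.
  - rewrite (target_stable e t t'); auto.
Qed.

Lemma in_diag_eq1 k t : in_diag (cpair k t) = 1 <-> ~ killed k t.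
Proof.
  unfold in_diag. rewrite csnd_cpair.
  destruct (bfold kills Nat.add (cpair k t) (S t)) eqn:E; simpl.
  - rewrite bsum_eq0 in E. split; [|reflexivity].
    intros _ [e [Le [Hp [Ht Hk]]]]. specialize (E e ltac:(lia)). unfold kills in E.
    rewrite !cfst_cpair, !csnd_cpair, Hp, Ht, !Nat.eqb_refl, (proj2 (Nat.leb_le _ _) Hk) in E.
    discriminate E.
  - split; [discriminate|]. intros Hn. exfalso.
    assert (Hk : exists e, e < S t /\ kills (cpair (cpair k t) e) <> 0).
    { apply NNPP. intro C. assert (bfold kills Nat.add (cpair k t) (S t) = 0); [|lia].
      apply bsum_eq0. intros e He. destruct (Nat.eq_dec (kills (cpair (cpair k t) e)) 0);
        auto. exfalso. eauto. }
    destruct Hk as [e [He Hk]]. apply Hn. exists e. unfold kills in Hk.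
    rewrite !cfst_cpair, !csnd_cpair in Hk.
    destruct (Nat.eqb_spec (pending e t) 0), (Nat.eqb_spec (target e t) k),
      (Nat.leb_spec (2 * e) k); simpl in Hk; lia.
Qed.

Lemma in_diag_le1 z : in_diag z <= 1.
Proof. unfold in_diag. destruct bfold; simpl; lia. Qed.

Definition diag_rel (z z' : nat) : Prop := in_diag z = 1 /\ in_diag z' = 1 /\ cfst z = cfst z'.

Definition diag : EqStr.
Proof.
  refine {| univ := fun z => in_diag z = 1; rel := diag_rel |};
    unfold diag_rel; intros; intuition congruence.
Defined.

Lemma computable_diag : computable_str diag.
Proof.
  split.
  - apply computable_pred_chi, (computable_ext in_diag); [apply computable_in_diag|].
    intro z. symmetry. apply chi_eq1_le1, in_diag_le1.
  - apply computable_rel_chi.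
    assert (H : computable_fun (fun p => in_diag (cfst p) * in_diag (csnd p)
                                          * Nat.b2n (cfst (cfst p) =? cfst (csnd p))))
      by computability.
    apply (computable2_ext _ _ (computable2_curry _ H)). intros z z'.
    rewrite cfst_cpair, csnd_cpair. simpl. unfold diag_rel.
    rewrite !chi_and, !chi_eq1_le1 by apply in_diag_le1.
    rewrite (chi_b2n _ (cfst z =? cfst z')); [lia|]. symmetry. apply Nat.eqb_eq.
Qed.

Lemma pigeonhole_large_value n (v : nat -> nat) :
  (forall i i', i <= n -> i' <= n -> v i = v i' -> i = i') -> exists i, i <= n /\ n <= v i.
Proof.
  intro Hinj. apply NNPP. intro Hn. assert (S n <= n); [|lia].
  apply (pigeonhole (S n) n v); [|intros; apply Hinj; lia].
  intros i Hi. destruct (Nat.lt_ge_cases (v i) n); auto. exfalso. apply Hn. exists i. split; lia.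
Qed.

Lemma column_survives N : exists k, N <= k /\ forall t, in_diag (cpair k t) = 1.
Proof.
  apply NNPP. intro Hn.
  assert (Hkill : forall j, exists e, j < N + 2 ->
            exists t, e <= t /\ pending e t = 0 /\ target e t = N + j /\ 2 * e <= N + j).
  { intro j. destruct (Nat.lt_ge_cases j (N + 2)) as [L|L]; [|exists 0; lia].
    assert (exists t, killed (N + j) t) as [t [e He]]; [|exists e; eauto].
    apply NNPP. intro C. apply Hn. exists (N + j). split; [lia|].
    intro t. apply in_diag_eq1. eauto. }
  destruct (choice _ Hkill) as [killer Hkiller].
  (* the killers of the columns [N, ..., 2N+1] are distinct and at most [N] *)
  assert (N + 2 <= N + 1); [|lia].
  apply (pigeonhole (N + 2) (N + 1) killer).
  - intros j Hj. destruct (Hkiller j Hj) as [t [_ [_ [_ L]]]]. lia.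
  - intros j j' Hj Hj' E.
    destruct (Hkiller j Hj) as [t [_ [P1 [T1 _]]]], (Hkiller j' Hj') as [t' [_ [P2 [T2 _]]]].
    rewrite E in P1, T1. destruct (Nat.le_ge_cases t t').
    + rewrite (target_stable _ t t') in T2; auto. lia.
    + rewrite (target_stable _ t' t) in T1; auto. lia.
Qed.

Lemma surviving_columns : exists col : nat -> nat,
  (forall i j, col i = col j -> i = j) /\ forall i t, in_diag (cpair (col i) t) = 1.
Proof.
  destruct (choice _ column_survives) as [sv Hsv].
  set (col := natrec (sv 0) (fun _ r => sv (S r))).
  assert (Hcol : forall i t, in_diag (cpair (col i) t) = 1) by (intros [|i]; apply Hsv).
  assert (Hmono : forall i j, i < j -> col i < col j).
  { intros i j L. induction L as [|j L IH];
      [change (col (S i)) with (sv (S (col i))); destruct (Hsv (S (col i)))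
      |change (col (S j)) with (sv (S (col j))); destruct (Hsv (S (col j)))]; lia. }
  exists col. split; auto.
  intros i j E. destruct (Nat.lt_trichotomy i j) as [L|[L|L]]; auto; apply Hmono in L; lia.
Qed.

Lemma omega_omega_bi_embeddable_diag : bi_embeddable omega_omega diag.
Proof.
  split.
  - destruct surviving_columns as [col [Hinj Hcol]].
    exists (fun x => cpair (col (cfst x)) (csnd x)). split; [|split].
    + intros x _. apply Hcol.
    + intros x y _ _ E. apply cpair_inj in E as [E1 E2]. apply Hinj in E1.
      rewrite <- (cpair_eta x), <- (cpair_eta y). congruence.
    + intros x y _ _. simpl. unfold same_column, diag_rel. rewrite !cfst_cpair.
      split; [intro E; rewrite E; auto | intros [_ [_ E]]; auto].
  - exists (fun x => x). split; [|split]; [intros; exact I | auto |].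
    intros x y Ux Uy. simpl in *. unfold same_column, diag_rel. tauto.
Qed.

Section EmbeddingIntoDiag.
Variable f : nat -> nat.
Hypothesis f_emb : is_embedding omega_omega diag f.

Lemma embedding_column_image i j : cfst (f (cpair i j)) = cfst (f (cpair i 0)).
Proof.
  destruct f_emb as [_ [_ Hrel]].
  assert (H : rel diag (f (cpair i j)) (f (cpair i 0))).
  { apply Hrel; try exact I. simpl. unfold same_column. rewrite !cfst_cpair. reflexivity. }
  destruct H as [_ [_ E]]. exact E.
Qed.

Lemma embedding_column_inj i i' : cfst (f (cpair i 0)) = cfst (f (cpair i' 0)) -> i = i'.
Proof.
  intro E. destruct f_emb as [Hu [_ Hrel]].
  assert (same_column (cpair i 0) (cpair i' 0)) as H.
  { apply Hrel; try exact I. split; [apply Hu, I | split; [apply Hu, I | exact E]]. }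
  unfold same_column in H. rewrite !cfst_cpair in H. exact H.
Qed.

Lemma embedding_column_unbounded i T :
  exists t, T <= t /\ in_diag (cpair (cfst (f (cpair i 0))) t) = 1.
Proof.
  destruct f_emb as [Hu [Hinj _]]. apply NNPP. intro Hn. assert (S T <= T); [|lia].
  apply (pigeonhole (S T) T (fun j => csnd (f (cpair i j)))).
  - intros j _. destruct (Nat.lt_ge_cases (csnd (f (cpair i j))) T); auto. exfalso.
    apply Hn. exists (csnd (f (cpair i j))). split; auto.
    rewrite <- (embedding_column_image i j), cpair_eta. apply Hu. exact I.
  - intros j j' _ _ E.
    assert (f (cpair i j) = f (cpair i j')) as Ef.
    { rewrite <- (cpair_eta (f (cpair i j))), <- (cpair_eta (f (cpair i j'))), E,
        (embedding_column_image i j), (embedding_column_image i j'). reflexivity. }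
    apply Hinj, cpair_inj in Ef; try exact I. tauto.
Qed.

End EmbeddingIntoDiag.

Lemma diag_no_computable_embedding f : computable_fun f -> ~ is_embedding omega_omega diag f.
Proof.
  intros [c Hc] Hf. set (e := code_num c). set (v i := cfst (f (cpair i 0))).
  destruct (uniform_bound (fun i t => state_at e (cpair i 0) t = ret_st (f (cpair i 0)) 0)
              (fun i => eval_state_at c _ _ (Hc (cpair i 0))) (S (2 * e))) as [T1 HT1].
  set (T := Nat.max T1 e).
  assert (Hp : pending e T = 0).
  { apply pending_eq0. intros i Hi. rewrite HT1 by lia. apply halted_ret_st. }
  assert (Hv : forall i, i < S (2 * e) -> output_column_at (cpair (cpair e T) i) = v i).
  { intros i Hi. unfold output_column_at. rewrite !cfst_cpair, !csnd_cpair, HT1 by lia.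
    unfold ret_st. rewrite !cfst_cpair, csnd_cpair. reflexivity. }
  destruct (bmax_attained output_column_at (cpair e T) (S (2 * e))) as [i [Hi Ei]]; [lia|].
  fold (target e T) in Ei. rewrite Hv in Ei by exact Hi.
  assert (Hk : 2 * e <= v i).
  { destruct (pigeonhole_large_value (2 * e) v) as [i' [Hi' Hvi']].
    - intros i1 i2 _ _. apply (embedding_column_inj f Hf).
    - pose proof (bmax_ub output_column_at (cpair e T) (S (2 * e)) i' ltac:(lia)).
      rewrite Hv in H by lia. fold (target e T) in H. lia. }
  destruct (embedding_column_unbounded f Hf i T) as [t [Lt Ht]].
  apply in_diag_eq1 in Ht. apply Ht, (killed_mono _ T); [|exact Lt].
  exists e. repeat split; auto; lia.
Qed.

Lemma omega_omega_not_comp_bi_emb_categorical : ~ comp_bi_emb_categorical omega_omega.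
Proof.
  intro H.
  destruct (H diag computable_diag omega_omega_bi_embeddable_diag) as [f [_ [Hf [_ [Ef _]]]]].
  exact (diag_no_computable_embedding f Hf Ef).
Qed.

Theorem corollary2p8 :
  exists A : EqStr,
    computable_str A /\ comp_categorical A /\ ~ comp_bi_emb_categorical A.
Proof.
  exists omega_omega. split; [|split].
  - exact computable_omega_omega.
  - exact omega_omega_comp_categorical.
  - exact omega_omega_not_comp_bi_emb_categorical.
Qed.
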